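(* Consider a binary MILP (maximization) solved by branch-and-bound with the worst-bound node selection rule and an LP solver satisfying Assumption 1. Then the branch-and-bound tree never branches on a node whose LP optimal objective value equals the optimal objective value of the MILP.
   Context: Branch-and-bound for a binary MILP $\max\{c^\top x: x\in P,\ x_1,\dots,x_n\in\{0,1\}\}$: each node is the LP relaxation with some binary variables fixed to $0$ or $1$; a node is pruned if its LP is infeasible, if the returned LP solution is integral, or if its LP value is worse than the value of an integral solution already found; the worst-bound rule selects next an open node with the largest LP value. Assumption 1: if the LP at a node has an integral optimal solution, the LP solver returns one. *)

From HB Require Import structures.
From mathcomp Require Import all_boot all_order all_algebra.
Set Implicit Arguments. Unset Strict Implicit. Unset Printing Implicit Defensive.
Import Order.TTheory GRing.Theory Num.Theory.
Local Open Scope ring_scope.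

(* A node of the B&B tree: a partial fixing of variables to 0 (false) / 1 (true). *)
Definition fixing (d : nat) := {ffun 'I_d -> option bool}.

Definition root_fixing (d : nat) : fixing d := [ffun => None].

Definition child (d : nat) (f : fixing d) (i : 'I_d) (bb : bool) : fixing d :=
  [ffun j => if j == i then Some bb else f j].

Section BB.
Variables (R : realFieldType) (m d : nat).
Variables (A : 'M[R]_(m, d)) (b : 'cV[R]_m) (c : 'cV[R]_d) (bin : {set 'I_d}).

Definition inP (x : 'cV[R]_d) : Prop := forall k, (A *m x) k 0 <= b k 0.

Definition obj (x : 'cV[R]_d) : R := \sum_(j < d) c j 0 * x j 0.

Definition bin_int (x : 'cV[R]_d) : bool :=
  [forall j in bin, (x j 0 == 0) || (x j 0 == 1)].

Definition milp_feas (x : 'cV[R]_d) : Prop := inP x /\ bin_int x.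
Definition milp_opt (x : 'cV[R]_d) : Prop :=
  milp_feas x /\ forall y, milp_feas y -> obj y <= obj x.

Definition respects (f : fixing d) (x : 'cV[R]_d) : Prop :=
  forall j bb, f j = Some bb -> x j 0 = (if bb then 1 else 0).
Definition lp_feas (f : fixing d) (x : 'cV[R]_d) : Prop := inP x /\ respects f x.
Definition lp_opt (f : fixing d) (x : 'cV[R]_d) : Prop :=
  lp_feas f x /\ forall y, lp_feas f y -> obj y <= obj x.

Variable sol : fixing d -> option 'cV[R]_d.

Definition lp_solver : Prop :=
  forall f, (sol f = None -> ~ exists x, lp_feas f x) /\
            (forall x, sol f = Some x -> lp_opt f x).

Definition assumption1 : Prop :=
  forall f, (exists x, lp_opt f x /\ bin_int x) ->
            exists x, sol f = Some x /\ bin_int x.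

(* LP value of a node (only meaningful when the LP is feasible) *)
Definition node_value (f : fixing d) : R :=
  if sol f is Some x then obj x else 0.

(* state: list of open nodes, value of the best integral solution found so far *)
Definition state := (seq (fixing d) * option R)%type.

Definition below (inc : option R) (v : R) : Prop :=
  if inc is Some z then v <= z else False.

(* solve the LP of a newly created node: prune if infeasible, or if integral
   (updating the incumbent); otherwise the node becomes open *)
Definition process_node (s : state) (f : fixing d) : state :=
  match sol f with
  | None => s
  | Some x =>
      if bin_int x then
        (s.1, Some (if s.2 is Some v then Num.max v (obj x) else obj x))
      else (rcons s.1 f, s.2)
  end.

Definition init_state : state := process_node ([::], None) (root_fixing d).

(* worst-bound: f is an open node of largest LP value, and it is not
   prunable by bound *)
Definition can_branch (s : state) (f : fixing d) : Prop :=
  [/\ f \in s.1, ~ below s.2 (node_value f) &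
      forall g, g \in s.1 -> node_value g <= node_value f].

Definition branch_step (s : state) (f : fixing d) (i : 'I_d) (s' : state) : Prop :=
  [/\ can_branch s f, i \in bin, f i = None &
      s' = foldl process_node (rem f s.1, s.2) [:: child f i false; child f i true]].

Inductive bb_step : state -> state -> Prop :=
| bb_prune s f : f \in s.1 -> below s.2 (node_value f) -> bb_step s (rem f s.1, s.2)
| bb_branch s f i s' : branch_step s f i s' -> bb_step s s'.

Inductive reachable : state -> Prop :=
| reach_init : reachable init_state
| reach_step s s' : reachable s -> bb_step s s' -> reachable s'.

End BB.

(* Fix any integral feasible point x. Along the run, either the incumbent is
   already at least obj x, or x is still feasible for the LP of some open node:
   branching on the node containing x puts x into one of its two children.
   An open node always carries a fractional LP solution, so by Assumption 1 its
   LP value is strictly above obj x (an LP optimum of value obj x would be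
   integral). Hence a node chosen by the worst-bound rule has LP value either
   prunable by the incumbent or strictly above obj x. *)
From HB Require Import structures.
From mathcomp Require Import all_boot all_order all_algebra.
Set Implicit Arguments. Unset Strict Implicit. Unset Printing Implicit Defensive.
Import Order.TTheory GRing.Theory Num.Theory.
Local Open Scope ring_scope.

Section BranchAndBound.
Variables (R : realFieldType) (m d : nat).
Variables (A : 'M[R]_(m, d)) (b : 'cV[R]_m) (c : 'cV[R]_d) (bin : {set 'I_d}).
Variable sol : fixing d -> option 'cV[R]_d.
Hypothesis solver : lp_solver A b c sol.

Local Notation process := (process_node c bin sol).

Lemma lp_solution_ge f x y : sol f = Some y -> lp_feas A b f x -> obj c x <= obj c y.
Proof. by move=> Ey; apply: ((solver f).2 y Ey).2. Qed.

Lemma lp_feasible_solution f x : lp_feas A b f x -> exists y, sol f = Some y.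
Proof.
move=> fx; case Ef: (sol f) => [y|]; first by exists y.
by case: ((solver f).1 Ef); exists x.
Qed.

Lemma fractional_lp_value_gt f x y :
  assumption1 A b c bin sol -> sol f = Some y -> ~~ bin_int bin y ->
  lp_feas A b f x -> bin_int bin x -> obj c x < obj c y.
Proof.
move=> ass1 Ey y_frac fx x_int; rewrite lt_neqAle (lp_solution_ge Ey fx) andbT.
apply/negP => /eqP xy.
have x_opt : lp_opt A b c f x.
  by split=> // z fz; rewrite xy; exact: lp_solution_ge Ey fz.
have [y' [Ey' y'_int]] := ass1 f (ex_intro _ x (conj x_opt x_int)).
by move: y_frac; rewrite Ey in Ey'; case: Ey' => ->; rewrite y'_int.
Qed.

Lemma child_respects (f : fixing d) i bb (x : 'cV[R]_d) :
  respects f x -> x i 0 = (if bb then 1 else 0) -> respects (child f i bb) x.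
Proof. by move=> fx xi j bb'; rewrite ffunE; case: eqP => [-> [<-] | _] //; apply: fx. Qed.

Definition open_fractional (s : state R d) : Prop :=
  forall f, f \in s.1 -> exists2 y, sol f = Some y & ~~ bin_int bin y.

Lemma process_open_fractional s f : open_fractional s -> open_fractional (process s f).
Proof.
rewrite /process_node; case Ef: (sol f) => [y|] // open_s.
case: ifP => y_int //= g; rewrite mem_rcons inE => /predU1P [-> | ]; last exact: open_s.
by exists y; rewrite ?y_int.
Qed.

Lemma process_mem s f g : g \in s.1 -> g \in (process s f).1.
Proof.
rewrite /process_node; case: (sol f) => [y|] // gs.
by case: ifP => //= _; rewrite mem_rcons inE gs orbT.
Qed.

Section Tracking.
Variable x : 'cV[R]_d.
Hypothesis x_feas : milp_feas A b bin x.

Definition incumbent_ge (s : state R d) : Prop :=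
  exists2 z, s.2 = Some z & obj c x <= z.

Definition tracks (s : state R d) : Prop :=
  incumbent_ge s \/ exists2 g, g \in s.1 & respects g x.

Lemma process_incumbent_ge s f : incumbent_ge s -> incumbent_ge (process s f).
Proof.
case=> z Ez xz; rewrite /process_node; case: (sol f) => [y|]; last by exists z.
case: ifP => /= _; last by exists z.
by rewrite Ez; eexists; first reflexivity; rewrite le_max xz.
Qed.

Lemma process_tracks s f : tracks s -> tracks (process s f).
Proof.
case=> [inc | [g gs gx]]; first by left; apply: process_incumbent_ge.
by right; exists g => //; apply: process_mem.
Qed.

Lemma process_tracks_feasible s f : respects f x -> tracks (process s f).
Proof.
move=> fx; have fxP : lp_feas A b f x by split; first exact: x_feas.1.
have [y Ey] := lp_feasible_solution fxP; have xy := lp_solution_ge Ey fxP.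
rewrite /process_node Ey; case: ifP => _ /=.
  by left; eexists; first reflexivity; case: s.2 => [v|] //; rewrite le_max xy orbT.
by right; exists f; rewrite ?mem_rcons ?mem_head.
Qed.

Lemma branch_tracks s f i s' : tracks s -> branch_step c bin sol s f i s' -> tracks s'.
Proof.
move=> [inc | [g gs gx]] [_ i_bin _ ->] /=.
  by left; do 2!apply: process_incumbent_ge.
have [<- | gf] := eqVneq g f; last first.
  by right; exists g => //; do 2!apply: process_mem; apply: rem_mem.
have := forallP x_feas.2 i; rewrite i_bin /= => /orP [/eqP xi0 | /eqP xi1].
  by apply: process_tracks; apply: process_tracks_feasible; apply: child_respects.
by apply: process_tracks_feasible; apply: child_respects.
Qed.

Lemma prune_tracks s f :
  open_fractional s -> tracks s -> f \in s.1 -> below s.2 (node_value c sol f) ->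
  tracks (rem f s.1, s.2).
Proof.
move=> open_s [inc | [g gs gx]] fs; first by left.
have [<- | gf] := eqVneq g f; last by right; exists g => //; apply: rem_mem.
have [y Ey _] := open_s g gs; rewrite /below /node_value Ey.
case Ez: s.2 => [z|] // yz; left; exists z => //; apply: le_trans yz.
by apply: (lp_solution_ge Ey); split; first exact: x_feas.1.
Qed.

Lemma reachable_invariant s :
  reachable c bin sol s -> open_fractional s /\ tracks s.
Proof.
elim=> [| s0 s1 _ inv_s0 step]; last case: step inv_s0
  => [s2 f fs f_below | s2 f i s3 br] [open_s tr_s].
- split; first by apply: process_open_fractional.
  by apply: process_tracks_feasible => j bb; rewrite ffunE.
- by split; [move=> g /mem_rem /open_s | apply: prune_tracks].
- split; last exact: branch_tracks br.
  case: br => _ _ _ ->; do 2!apply: process_open_fractional.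
  by move=> g /mem_rem /open_s.
Qed.

End Tracking.

End BranchAndBound.

Theorem mainTheorem8 (R : realFieldType) (m d : nat)
  (A : 'M[R]_(m, d)) (b : 'cV[R]_m) (c : 'cV[R]_d) (bin : {set 'I_d})
  (sol : fixing d -> option 'cV[R]_d) (xstar : 'cV[R]_d) :
  milp_opt A b c bin xstar ->
  lp_solver A b c sol ->
  assumption1 A b c bin sol ->
  forall (s s' : state R d) (f : fixing d) (i : 'I_d),
    reachable c bin sol s ->
    branch_step c bin sol s f i s' ->
    node_value c sol f <> obj c xstar.
Proof.
move=> [xstar_feas _] solver ass1 s s' f i reach [[_ f_not_below f_max] _ _ _] fx.
have [open_s [[z Ez xz] | [g gs gx]]] := reachable_invariant solver xstar_feas reach.
  by apply: f_not_below; rewrite /below Ez fx.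
have [y Ey y_frac] := open_s g gs.
have gxP : lp_feas A b g xstar by split; first exact: xstar_feas.1.
have := fractional_lp_value_gt solver ass1 Ey y_frac gxP xstar_feas.2.
have g_value : node_value c sol g = obj c y by rewrite /node_value Ey.
by rewrite -fx -g_value ltNge f_max.
Qed.
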